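(* Let $U\subseteq\mathbb{R}^4$ be open with coordinates $(x^1,x^2,x^3,x^4)$ and let $a,b,p,q,s$ be real constants with $a^2+b^2\neq0$. Consider the Lorentzian metric $$g=2\,dx^1dx^4+(dx^2)^2+(dx^3)^2+\Big(x^4\big(a(x^2)^2+b(x^3)^2\big)+p(x^2)^2+2qx^2x^3+s(x^3)^2\Big)(dx^4)^2$$ on $U$. Then $(U,g)$ belongs to class $\mathcal{A}$ (its Ricci tensor is a Killing tensor) if and only if $b=-a$.
   Context: A pseudo-Riemannian manifold belongs to Gray's class $\mathcal{A}$ if its Ricci tensor $\varrho$ is cyclic-parallel, $(\nabla_X\varrho)(Y,Z)+(\nabla_Y\varrho)(Z,X)+(\nabla_Z\varrho)(X,Y)=0$ for all vector fields $X,Y,Z$, equivalently $(\nabla_X\varrho)(X,X)=0$ for all $X$; $\nabla$ is the Levi-Civita connection. *)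

From HB Require Import structures.
From mathcomp Require Import all_boot all_order all_algebra.
From mathcomp Require Import all_classical all_reals all_analysis.
Set Implicit Arguments. Unset Strict Implicit. Unset Printing Implicit Defensive.
Import Order.TTheory GRing.Theory Num.Theory.
Import numFieldNormedType.Exports.
Local Open Scope classical_set_scope.
Local Open Scope ring_scope.

Section Geometry.
Variable R : realType.
Notation pt := 'rV[R]_4.

(* coordinate x^(i+1) of a point (0-based index i) *)
Definition coord (x : pt) (i : 'I_4) : R := x ord0 i.

Definition pd (f : pt -> R) (i : 'I_4) (x : pt) : R :=
  'D_(delta_mx ord0 i : pt) f x.

Definition christoffel (g : pt -> 'M[R]_4) (k i j : 'I_4) (x : pt) : R :=
  2^-1 * \sum_(l < 4) (invmx (g x)) k l *
    (pd (fun y => g y j l) i x + pd (fun y => g y i l) j x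
     - pd (fun y => g y i j) l x).

Definition ricci (g : pt -> 'M[R]_4) (i j : 'I_4) (x : pt) : R :=
  \sum_(k < 4) (pd (christoffel g k i j) k x - pd (christoffel g k i k) j x)
  + \sum_(k < 4) \sum_(l < 4)
      (christoffel g k k l x * christoffel g l i j x
       - christoffel g k j l x * christoffel g l i k x).

Definition nabla_ricci (g : pt -> 'M[R]_4) (k i j : 'I_4) (x : pt) : R :=
  pd (ricci g i j) k x
  - \sum_(l < 4) (christoffel g l k i x * ricci g l j x
                  + christoffel g l k j x * ricci g i l x).

Definition classA (U : set pt) (g : pt -> 'M[R]_4) : Prop :=
  forall x, U x -> forall i j k : 'I_4,
    nabla_ricci g k i j x + nabla_ricci g i j k x + nabla_ricci g j k i x = 0.

(* The metric of the theorem (indices 0,1,2,3 stand for x^1,x^2,x^3,x^4):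
   g = 2 dx^1 dx^4 + (dx^2)^2 + (dx^3)^2 + H (dx^4)^2 *)
Definition Hfun (a b p q s : R) (x : pt) : R :=
  coord x 3%:R * (a * coord x 1%:R ^+ 2 + b * coord x 2%:R ^+ 2)
  + p * coord x 1%:R ^+ 2 + 2 * q * coord x 1%:R * coord x 2%:R
  + s * coord x 2%:R ^+ 2.

Definition metric_ex (a b p q s : R) (x : pt) : 'M[R]_4 :=
  \matrix_(i < 4, j < 4)
    if ((i == 0 :> nat) && (j == 3 :> nat)) || ((i == 3 :> nat) && (j == 0 :> nat))
    then 1
    else if ((i == 1 :> nat) && (j == 1 :> nat)) || ((i == 2 :> nat) && (j == 2 :> nat))
    then 1
    else if (i == 3 :> nat) && (j == 3 :> nat) then Hfun a b p q s x
    else 0.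

End Geometry.

(* The metric is a pp-wave.  Its only nonzero Ricci component is
   rho_44 = -((a + b) x^4 + p + s), and Gamma^4_ij = 0, i.e. dx^4 is parallel,
   so nabla rho = d rho_44 (x) dx^4 (x) dx^4.  The only nonzero component of
   nabla rho is therefore (nabla_4 rho)_44 = -(a + b), and the cyclic sum of
   nabla rho vanishes everywhere iff it vanishes at (4, 4, 4), where it is
   -3 (a + b). *)

From HB Require Import structures.
From mathcomp Require Import all_boot all_order all_algebra.
From mathcomp Require Import all_classical all_reals all_analysis.
From mathcomp Require Import ring lra.
Set Implicit Arguments. Unset Strict Implicit. Unset Printing Implicit Defensive.
Import Order.TTheory GRing.Theory Num.Theory.
Import numFieldNormedType.Exports.
Local Open Scope classical_set_scope.
Local Open Scope ring_scope.

(* Polynomial expressions in the coordinates and in named constants, with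
   symbolic differentiation: the Christoffel symbols and the Ricci tensor of the
   metric are computed as such terms by [vm_compute] and then checked by [field]. *)
Inductive term : Type :=
  | TZero | TOne | TConst of nat | TVar of nat
  | TAdd of term & term | TMul of term & term | TOpp of term.

Definition tadd (t u : term) : term :=
  match t, u with TZero, _ => u | _, TZero => t | _, _ => TAdd t u end.

Definition tmul (t u : term) : term :=
  match t, u with
  | TZero, _ | _, TZero => TZero
  | TOne, _ => u | _, TOne => t
  | _, _ => TMul t u
  end.

Definition topp (t : term) : term :=
  match t with TZero => TZero | TOpp u => u | _ => TOpp t end.

Fixpoint tderiv (t : term) (i : nat) : term :=
  match t with
  | TZero | TOne | TConst _ => TZero
  | TVar j => if i == j then TOne else TZero
  | TAdd u v => tadd (tderiv u i) (tderiv v i)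
  | TMul u v => tadd (tmul (tderiv u i) v) (tmul u (tderiv v i))
  | TOpp u => topp (tderiv u i)
  end.

Definition tsum4 (f : nat -> term) : term :=
  tadd (f 0) (tadd (f 1) (tadd (f 2) (f 3)))%N.

Section TermSemantics.
Variable R : realType.
Notation pt := 'rV[R]_4.

(* Out-of-range indices read as the constant 0, which keeps [tderiv] exact. *)
Definition coordn (x : pt) (n : nat) : R :=
  if (n < 4)%N then coord x (inord n) else 0.

Fixpoint eval_term (c : nat -> R) (t : term) (x : pt) : R :=
  match t with
  | TZero => 0 | TOne => 1 | TConst n => c n | TVar n => coordn x n
  | TAdd u v => eval_term c u x + eval_term c v x
  | TMul u v => eval_term c u x * eval_term c v x
  | TOpp u => - eval_term c u x
  end.

Variable c : nat -> R.

Lemma eval_tadd t u x : eval_term c (tadd t u) x = eval_term c t x + eval_term c u x.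
Proof. by case: t; case: u => * /=; rewrite ?add0r ?addr0. Qed.

Lemma eval_tmul t u x : eval_term c (tmul t u) x = eval_term c t x * eval_term c u x.
Proof. by case: t; case: u => * /=; rewrite ?mul0r ?mulr0 ?mul1r ?mulr1. Qed.

Lemma eval_topp t x : eval_term c (topp t) x = - eval_term c t x.
Proof. by case: t => * /=; rewrite ?oppr0 ?opprK. Qed.

Lemma eval_tsum4 f x : eval_term c (tsum4 f) x = \sum_(l < 4) eval_term c (f l) x.
Proof. by rewrite /tsum4 !eval_tadd !big_ord_recl big_ord0 addr0. Qed.

Lemma is_derive_coord (i j : 'I_4) (x : pt) :
  is_derive x (delta_mx ord0 i : pt) (fun y : pt => coord y j) (i == j)%:R.
Proof.
have did : derivable (@id pt) x (delta_mx ord0 i) by [].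
apply: DeriveDef; first by move/derivable_mxP: did; apply.
have /matrixP/(_ ord0 j) := derive_mx did.
by rewrite derive_id !mxE eqxx andTb eq_sym => ->.
Qed.

Lemma is_derive_coordn (i : 'I_4) (n : nat) (x : pt) :
  is_derive x (delta_mx ord0 i : pt) (fun y : pt => coordn y n) (i == n :> nat)%:R.
Proof.
rewrite /coordn; case: ltnP => hn; last first.
  rewrite (_ : (i == n :> nat) = false); first exact: is_derive_cst.
  by apply/negbTE; rewrite neq_ltn (leq_trans (ltn_ord i) hn).
rewrite (_ : (i == n :> nat) = (i == inord n)); first exact: is_derive_coord.
by rewrite -(inj_eq val_inj) /= inordK.
Qed.

Lemma is_derive_eval_term t (i : 'I_4) (x : pt) :
  is_derive x (delta_mx ord0 i : pt) (eval_term c t) (eval_term c (tderiv t i) x).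
Proof.
elim: t => [||n|n|u IHu v IHv|u IHu v IHv|u IHu] /=.
- exact: is_derive_cst.
- exact: is_derive_cst.
- exact: is_derive_cst.
- by have := is_derive_coordn i n x; case: (i == n :> nat).
- rewrite eval_tadd; exact: is_deriveD.
- rewrite eval_tadd !eval_tmul addrC [_ * eval_term c v x]mulrC.
  exact: is_deriveM.
- rewrite eval_topp; exact: is_deriveN.
Qed.

Lemma pd_eval_term t (i : 'I_4) (x : pt) :
  pd (eval_term c t) i x = eval_term c (tderiv t i) x.
Proof. exact/derive_val/is_derive_eval_term. Qed.

End TermSemantics.

Definition Hterm : term :=
  let x1 := TVar 1 in let x2 := TVar 2 in let x4 := TVar 3 in
  TAdd (TAdd (TAdd (TMul x4 (TAdd (TMul (TConst 0) (TMul x1 x1))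
                                  (TMul (TConst 1) (TMul x2 x2))))
                   (TMul (TConst 2) (TMul x1 x1)))
             (TMul (TMul (TMul (TAdd TOne TOne) (TConst 3)) x1) x2))
       (TMul (TConst 4) (TMul x2 x2)).

Definition metric_term (i j : nat) : term :=
  if ((i == 0) && (j == 3)) || ((i == 3) && (j == 0)) then TOne
  else if ((i == 1) && (j == 1)) || ((i == 2) && (j == 2)) then TOne
  else if (i == 3) && (j == 3) then Hterm
  else TZero.

Definition inv_metric_term (k l : nat) : term :=
  if (k == 0) && (l == 0) then TOpp Hterm
  else if [|| (k == 0) && (l == 3), (k == 3) && (l == 0),
              (k == 1) && (l == 1) | (k == 2) && (l == 2)] then TOne
  else TZero.

Definition christoffel_term (k i j : nat) : term :=
  tmul (TConst 5) (tsum4 (fun l => tmul (inv_metric_term k l)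
    (tadd (tadd (tderiv (metric_term j l) i) (tderiv (metric_term i l) j))
          (topp (tderiv (metric_term i j) l))))).

Definition ricci_term (i j : nat) : term :=
  tadd (tsum4 (fun k => tadd (tderiv (christoffel_term k i j) k)
                             (topp (tderiv (christoffel_term k i k) j))))
       (tsum4 (fun k => tsum4 (fun l =>
          tadd (tmul (christoffel_term k k l) (christoffel_term l i j))
               (topp (tmul (christoffel_term k j l) (christoffel_term l i k)))))).

Lemma inord_natr (n m : nat) : (m < n.+2)%N -> inord m = m%:R :> 'I_n.+2.
Proof. by move=> lt_mn; apply/val_inj; rewrite Zp_nat /= inordK // modn_small. Qed.

Ltac reduce_term t :=
  let v := eval vm_compute in t in rewrite (_ : t = v); last by vm_compute.

Section MetricEx.
Variables (R : realType) (a b p q s : R).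
Let g := metric_ex a b p q s.
(* [TConst n] denotes the n-th of a, b, p, q, s, 1/2. *)
Let c : nat -> R := nth 0 [:: a; b; p; q; s; 2^-1].

Lemma Hfun_term : Hfun a b p q s = eval_term c Hterm.
Proof.
apply/funext => x; rewrite /Hfun /= /coordn /= !inord_natr //; ring.
Qed.

Lemma metric_ex_term (i j : 'I_4) :
  (fun y => metric_ex a b p q s y i j) = eval_term c (metric_term i j).
Proof.
apply/funext => y; rewrite mxE /metric_term.
by do ?[case: ifP => _]; rewrite /= ?Hfun_term.
Qed.

Lemma invmx_metric_ex x :
  invmx (g x) = \matrix_(k < 4, l < 4) eval_term c (inv_metric_term k l) x.
Proof.
set B := \matrix_(k, l) _.
have gB : g x *m B = 1%:M.
  apply/matrixP => i j; rewrite !mxE !big_ord_recl big_ord0 !mxE /inv_metric_term /=.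
  rewrite Hfun_term.
  by case: i => [[|[|[|[|//]]]] ?]; case: j => [[|[|[|[|//]]]] ?] /=; ring.
have [gU _] := mulmx1_unit gB.
by rewrite -[invmx _]mulmx1 -gB mulmxA mulVmx // mul1mx.
Qed.

Lemma christoffel_metric_ex (k i j : 'I_4) :
  christoffel g k i j = eval_term c (christoffel_term k i j).
Proof.
apply/funext => x; rewrite /christoffel /christoffel_term eval_tmul eval_tsum4.
congr (_ * _); apply: eq_bigr => l _.
by rewrite invmx_metric_ex mxE eval_tmul !eval_tadd eval_topp !metric_ex_term !pd_eval_term.
Qed.

Lemma ricci_metric_ex_term (i j : 'I_4) : ricci g i j = eval_term c (ricci_term i j).
Proof.
apply/funext => x; rewrite /ricci /ricci_term eval_tadd !eval_tsum4; congr (_ + _).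
  by apply: eq_bigr => k _; rewrite eval_tadd eval_topp !christoffel_metric_ex !pd_eval_term.
apply: eq_bigr => k _; rewrite eval_tsum4; apply: eq_bigr => l _.
by rewrite !christoffel_metric_ex eval_tadd eval_topp !eval_tmul.
Qed.

(* g^{4l} is nonzero only for l = 1, the g_{i1} are constant and nothing depends on x^1. *)
Lemma christoffel_metric_ex_x4 (i j : 'I_4) x : christoffel g 3%:R i j x = 0.
Proof.
rewrite christoffel_metric_ex.
case: i => [[|[|[|[|//]]]] ?]; case: j => [[|[|[|[|//]]]] ?];
  by rewrite (_ : christoffel_term _ _ _ = TZero); last by vm_compute.
Qed.

Lemma ricci_metric_ex (i j : 'I_4) x :
  ricci g i j x =
  if (i == 3 :> nat) && (j == 3 :> nat) then - ((a + b) * coord x 3%:R + (p + s)) else 0.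
Proof.
rewrite ricci_metric_ex_term.
case: i => [[|[|[|[|//]]]] ?]; case: j => [[|[|[|[|//]]]] ?];
  match goal with |- context [ricci_term ?i ?j] => reduce_term (ricci_term i j) end;
  rewrite /= /coordn /c /= ?inord_natr //; field; rewrite ?pnatr_eq0 //.
Qed.

Lemma pd_ricci_metric_ex (k i j : 'I_4) x :
  pd (ricci g i j) k x =
  if [&& k == 3 :> nat, i == 3 :> nat & j == 3 :> nat] then - (a + b) else 0.
Proof.
have -> : ricci g i j = fun y =>
    if (i == 3 :> nat) && (j == 3 :> nat) then - ((a + b) * coord y 3%:R + (p + s)) else 0.
  by apply/funext => y; exact: ricci_metric_ex.
rewrite /pd; case: ((i == 3 :> nat) && (j == 3 :> nat)); rewrite ?andbT ?andbF /=; last first.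
  by apply: derive_val; apply: is_derive_cst.
apply: derive_val.
have dx4 := is_derive_coord k 3%:R x.
have D := is_deriveN (is_deriveD (is_deriveM (is_derive_cst (a + b) x _) dx4)
                                 (is_derive_cst (p + s) x _)).
apply: (is_derive_eq D).
have -> : (k == 3%:R) = (k == 3 :> nat) by rewrite -(inj_eq val_inj).
by case: (k == 3 :> nat); rewrite /= !scaler0 !addr0 ?oppr0 // -[_ *: 1]/(_ * 1) mulr1.
Qed.

Lemma nabla_ricci_metric_ex (k i j : 'I_4) x :
  nabla_ricci g k i j x =
  if [&& k == 3 :> nat, i == 3 :> nat & j == 3 :> nat] then - (a + b) else 0.
Proof.
rewrite /nabla_ricci pd_ricci_metric_ex big1 ?subr0 // => l _.
have [l3 | l3] := eqVneq (l : nat) 3.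
  by rewrite (_ : l = 3%:R) ?christoffel_metric_ex_x4 ?mul0r ?addr0 //; apply/val_inj.
by rewrite !ricci_metric_ex (negbTE l3) andbF !mulr0 addr0.
Qed.

End MetricEx.

Theorem mainTheorem3 (R : realType) (U : set 'rV[R]_4) (a b p q s : R) :
  open U -> U !=set0 -> a ^+ 2 + b ^+ 2 != 0 ->
  (classA U (metric_ex a b p q s) <-> b = - a).
Proof.
move=> _ [x0 Ux0] _; split.
  move/(_ x0 Ux0 ord_max ord_max ord_max).
  by rewrite !nabla_ricci_metric_ex /=; lra.
move=> -> x _ i j k; rewrite !nabla_ricci_metric_ex.
by case: (i == 3 :> nat); case: (j == 3 :> nat); case: (k == 3 :> nat) => /=; lra.
Qed.
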